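(* Let $\mathbf u_0,\mathbf u_1\in\Lambda_q$ with $\mathbf u_0\wedge\mathbf u_1=1$. Start with the list $L_0=(\mathbf u_0,\mathbf u_1)$, and for $n\ge0$ obtain $L_{n+1}$ from $L_n$ by replacing every pair $(\mathbf v,\mathbf w)$ of consecutive entries of $L_n$ by the $q$ vectors $x_j^q\mathbf v+y_j^q\mathbf w$, $j=0,1,\dots,q-1$ (the first and last being $\mathbf v$ and $\mathbf w$ themselves; shared endpoints are listed once). Then for every $n\ge0$, every entry of $L_n$ lies in $\Lambda_q$ and in the sector $\{\alpha\mathbf u_0+\beta\mathbf u_1:\alpha,\beta\ge0\}$, and every pair $(\mathbf v,\mathbf w)$ of consecutive entries of $L_n$ satisfies $\mathbf v\wedge\mathbf w=1$. Moreover, every element of $\Lambda_q$ lying in the sector $\{\alpha\mathbf u_0+\beta\mathbf u_1:\alpha,\beta\ge0\}$ appears in $L_n$ for some $n$.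
   Context: Fix an integer $q\ge3$, let $\lambda_q=2\cos(\pi/q)$, and let $G_q\subset \mathrm{SL}(2,\mathbb R)$ be the Hecke triangle group generated by $S=\begin{pmatrix}0&-1\\1&0\end{pmatrix}$ and $T_q=\begin{pmatrix}1&\lambda_q\\0&1\end{pmatrix}$, acting linearly on $\mathbb R^2$. Set $\Lambda_q=G_q(1,0)^T$. Let $U_q=T_qS=\begin{pmatrix}\lambda_q&-1\\1&0\end{pmatrix}$ and $(x_j^q,y_j^q)^T=U_q^j(1,0)^T$ for $j=0,\dots,q-1$. The wedge product is $(x_0,y_0)^T\wedge(x_1,y_1)^T=x_0y_1-x_1y_0$. The vectors appearing in some $L_n$ other than $\mathbf u_0,\mathbf u_1$ are called the ($G_q$-Stern–Brocot) grandchildren of $\mathbf u_0,\mathbf u_1$. *)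

From Stdlib Require Import Reals List.
Import ListNotations.
Open Scope R_scope.

Record mat2 := Mat2 { m11 : R; m12 : R; m21 : R; m22 : R }.
Definition vec := (R * R)%type.

Definition mmul (A B : mat2) : mat2 :=
  Mat2 (m11 A * m11 B + m12 A * m21 B) (m11 A * m12 B + m12 A * m22 B)
       (m21 A * m11 B + m22 A * m21 B) (m21 A * m12 B + m22 A * m22 B).

Definition mvec (A : mat2) (v : vec) : vec :=
  (m11 A * fst v + m12 A * snd v, m21 A * fst v + m22 A * snd v).

Definition Id2 : mat2 := Mat2 1 0 0 1.

Definition lam (q : nat) : R := 2 * cos (PI / INR q).

Definition Smat : mat2 := Mat2 0 (-1) 1 0.
Definition Sinv : mat2 := Mat2 0 1 (-1) 0.
Definition Tmat (q : nat) : mat2 := Mat2 1 (lam q) 0 1.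
Definition Tinv (q : nat) : mat2 := Mat2 1 (- lam q) 0 1.

(* The Hecke group G_q: the subgroup of SL(2,R) generated by S and T_q,
   i.e. all finite words in S, S^-1, T_q, T_q^-1. *)
Inductive inG (q : nat) : mat2 -> Prop :=
| inG_id : inG q Id2
| inG_S : forall g, inG q g -> inG q (mmul Smat g)
| inG_Sinv : forall g, inG q g -> inG q (mmul Sinv g)
| inG_T : forall g, inG q g -> inG q (mmul (Tmat q) g)
| inG_Tinv : forall g, inG q g -> inG q (mmul (Tinv q) g).

Definition inLambda (q : nat) (v : vec) : Prop :=
  exists g, inG q g /\ v = mvec g (1, 0).

Definition wedge (v w : vec) : R := fst v * snd w - fst w * snd v.

Definition Umat (q : nat) : mat2 := mmul (Tmat q) Smat.
Definition xy (q j : nat) : vec := Nat.iter j (mvec (Umat q)) (1, 0).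

Definition comb (q j : nat) (v w : vec) : vec :=
  (fst (xy q j) * fst v + snd (xy q j) * fst w,
   fst (xy q j) * snd v + snd (xy q j) * snd w).

(* One refinement step: the list v_0, v_1, ..., v_m becomes
   v_0, then for each consecutive pair (v,w) the vectors x_j v + y_j w for
   j = 1, ..., q-1 (j = 0 gives v, already listed). *)
Fixpoint refine_aux (q : nat) (v : vec) (rest : list vec) : list vec :=
  match rest with
  | [] => []
  | w :: rest' => map (fun j => comb q j v w) (seq 1 (q - 1)) ++ refine_aux q w rest'
  end.

Definition refine (q : nat) (l : list vec) : list vec :=
  match l with
  | [] => []
  | v :: rest => v :: refine_aux q v rest
  end.

Definition Ln (q : nat) (u0 u1 : vec) (n : nat) : list vec :=
  Nat.iter n (refine q) [u0; u1].

Definition in_sector (u0 u1 v : vec) : Prop :=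
  exists a b : R, 0 <= a /\ 0 <= b /\
    v = (a * fst u0 + b * fst u1, a * snd u0 + b * snd u1).

From Stdlib Require Import Reals List Lra Lia Psatz ZArith.
Import ListNotations.
Open Scope R_scope.

(* With [t = PI / q] one has [x_j = sin((j+1)t) / sin t] and [y_j = sin(jt) / sin t], so the
   matrices [N_j = (x_j x_(j+1); y_j y_(j+1))], [j <= q - 2], lie in [G_q] and have entries
   [0] or [>= 1]. Writing every [g] in [G_q] as [S^a N S^b] with [N] a product of such [N_j]
   shows that every entry of [g] is [0] or of absolute value [>= 1].

   Call [(v, w)] a basis if the matrix with columns [v], [w] is in [G_q]. Replacing a basis
   by its consecutive children [x_j v + y_j w] is right multiplication by [N_j], so bases stay
   bases along the refinement, which gives the first two claims once [(u0, u1)] is a basis;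
   it is one, because [(a, 1)] in [Lambda_q] forces [a] in [lam_q Z]. For completeness, a
   lattice point [z = a u0 + b u1] of the sector has [a, b] equal to [0] or [>= 1]; if one of
   them vanishes then [z] is [u0] or [u1], otherwise [z] lies in the sector of a child pair,
   with respect to which its coordinates have a sum smaller by at least 1. *)

Ltac mat_ring :=
  cbv [mmul mvec Id2 Smat Sinv Tmat Tinv]; simpl; f_equal; ring.

Lemma mmul_assoc A B C : mmul A (mmul B C) = mmul (mmul A B) C.
Proof. destruct A, B, C; mat_ring. Qed.

Lemma mmul_1l A : mmul Id2 A = A.
Proof. destruct A; mat_ring. Qed.

Lemma mmul_1r A : mmul A Id2 = A.
Proof. destruct A; mat_ring. Qed.

Lemma mvec_mmul A B u : mvec (mmul A B) u = mvec A (mvec B u).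
Proof. destruct A, B, u; mat_ring. Qed.

Definition det (M : mat2) : R := m11 M * m22 M - m12 M * m21 M.

Lemma det_mmul A B : det (mmul A B) = det A * det B.
Proof. destruct A, B; unfold det, mmul; simpl; ring. Qed.

Definition adj (M : mat2) : mat2 := Mat2 (m22 M) (- m12 M) (- m21 M) (m11 M).

Lemma adj_mmul A B : adj (mmul A B) = mmul (adj B) (adj A).
Proof. destruct A, B; unfold adj; mat_ring. Qed.

Lemma mvec_adj_l M u : det M = 1 -> mvec (adj M) (mvec M u) = u.
Proof.
  destruct M as [a b c d], u as [x y]; unfold det, adj, mvec; simpl; intros Hd.
  f_equal; [transitivity (x * (a * d - b * c)) | transitivity (y * (a * d - b * c))];
    solve [ring | rewrite Hd; ring].
Qed.

Definition colmat (v w : vec) : mat2 := Mat2 (fst v) (fst w) (snd v) (snd w).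

Definition lincomb (a b : R) (v w : vec) : vec :=
  (a * fst v + b * fst w, a * snd v + b * snd w).

Lemma mvec_colmat v w a b : mvec (colmat v w) (a, b) = lincomb a b v w.
Proof. unfold mvec, colmat, lincomb; simpl; f_equal; ring. Qed.

Lemma colmat_mvec M : colmat (mvec M (1, 0)) (mvec M (0, 1)) = M.
Proof. destruct M; unfold colmat, mvec; simpl; f_equal; ring. Qed.

Lemma lincomb_wedge v w z : wedge v w = 1 -> z = lincomb (wedge z w) (wedge v z) v w.
Proof.
  destruct v as [v1 v2], w as [w1 w2], z as [z1 z2]; unfold wedge, lincomb; simpl; intros Hw.
  f_equal; [transitivity (z1 * (v1 * w2 - w1 * v2)) | transitivity (z2 * (v1 * w2 - w1 * v2))];
    solve [rewrite Hw; ring | ring].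
Qed.

Lemma lincomb_lincomb a b p r v w :
  lincomb (fst (lincomb a b p r)) (snd (lincomb a b p r)) v w =
  lincomb a b (lincomb (fst p) (snd p) v w) (lincomb (fst r) (snd r) v w).
Proof. unfold lincomb; simpl; f_equal; ring. Qed.

Section HeckeGroup.

Variable q : nat.

Lemma inG_mmul A B : inG q A -> inG q B -> inG q (mmul A B).
Proof.
  intros HA; revert B; induction HA; intros B HB;
    [now rewrite mmul_1l | rewrite <- mmul_assoc; constructor; auto ..].
Qed.

Lemma inG_Smat : inG q Smat.
Proof. rewrite <- (mmul_1r Smat); repeat constructor. Qed.

Lemma inG_Sinv : inG q Sinv.
Proof. rewrite <- (mmul_1r Sinv); repeat constructor. Qed.

Lemma inG_Tmat : inG q (Tmat q).
Proof. rewrite <- (mmul_1r (Tmat q)); repeat constructor. Qed.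

Lemma inG_Tinv : inG q (Tinv q).
Proof. rewrite <- (mmul_1r (Tinv q)); repeat constructor. Qed.

Lemma inG_det g : inG q g -> det g = 1.
Proof. induction 1; rewrite ?det_mmul; unfold det in *; simpl in *; nra. Qed.

Lemma inG_adj g : inG q g -> inG q (adj g).
Proof.
  induction 1; rewrite ?adj_mmul.
  - replace (adj Id2) with Id2 by (unfold adj; mat_ring). constructor.
  - replace (adj Smat) with Sinv by (unfold adj; mat_ring). apply inG_mmul; auto using inG_Sinv.
  - replace (adj Sinv) with Smat by (unfold adj; mat_ring). apply inG_mmul; auto using inG_Smat.
  - replace (adj (Tmat q)) with (Tinv q) by (unfold adj; mat_ring).
    apply inG_mmul; auto using inG_Tinv.
  - replace (adj (Tinv q)) with (Tmat q) by (unfold adj; mat_ring).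
    apply inG_mmul; auto using inG_Tmat.
Qed.

Definition Tpow (k : Z) : mat2 := Mat2 1 (IZR k * lam q) 0 1.

Lemma inG_Tpow k : inG q (Tpow k).
Proof.
  induction k using Z.peano_ind.
  - replace (Tpow 0) with Id2 by (unfold Tpow; mat_ring). constructor.
  - replace (Tpow (Z.succ k)) with (mmul (Tmat q) (Tpow k))
      by (unfold Tpow; rewrite succ_IZR; mat_ring).
    constructor; assumption.
  - replace (Tpow (Z.pred k)) with (mmul (Tinv q) (Tpow k))
      by (unfold Tpow; rewrite <- Z.sub_1_r, minus_IZR; mat_ring).
    constructor; assumption.
Qed.

Lemma inLambda_mvec g v : inG q g -> inLambda q v -> inLambda q (mvec g v).
Proof.
  intros Hg [h [Hh ->]]. exists (mmul g h); split.
  - apply inG_mmul; assumption.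
  - symmetry; apply mvec_mmul.
Qed.

Definition hecke_basis (v w : vec) : Prop := inG q (colmat v w).

Lemma hecke_basis_wedge v w : hecke_basis v w -> wedge v w = 1.
Proof. exact (inG_det (colmat v w)). Qed.

Lemma hecke_basis_inLambda v w : hecke_basis v w -> inLambda q v /\ inLambda q w.
Proof.
  intros Hb; split.
  - exists (colmat v w); split; [exact Hb|].
    destruct v; unfold mvec, colmat; simpl; f_equal; ring.
  - exists (mmul (colmat v w) Smat); split; [apply inG_mmul; auto using inG_Smat|].
    destruct w; unfold mvec, mmul, colmat, Smat; simpl; f_equal; ring.
Qed.

Lemma inLambda_hecke_basis v : inLambda q v -> exists w, hecke_basis v w.
Proof.
  intros [g [Hg ->]]. exists (mvec g (0, 1)). unfold hecke_basis. rewrite colmat_mvec. exact Hg.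
Qed.

Lemma hecke_basis_coords v w z a b :
  hecke_basis v w -> inLambda q z -> z = lincomb a b v w -> inLambda q (a, b).
Proof.
  intros Hb Hz Ez.
  rewrite <- (mvec_adj_l (colmat v w) (a, b)) by exact (hecke_basis_wedge v w Hb).
  rewrite mvec_colmat, <- Ez. apply inLambda_mvec; [apply inG_adj|]; assumption.
Qed.

End HeckeGroup.

Definition zero_or_ge1 (x : R) : Prop := x = 0 \/ 1 <= x.

Definition zero_or_abs_ge1 (x : R) : Prop := zero_or_ge1 x \/ zero_or_ge1 (- x).

Lemma zero_or_ge1_mul a b : zero_or_ge1 a -> zero_or_ge1 b -> zero_or_ge1 (a * b).
Proof. unfold zero_or_ge1; intros [->|Ha] [->|Hb]; [left; ring .. | right; nra]. Qed.

Lemma zero_or_ge1_add a b : zero_or_ge1 a -> zero_or_ge1 b -> zero_or_ge1 (a + b).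
Proof. unfold zero_or_ge1; intros [->|Ha] [->|Hb]; [left; ring | right; lra ..]. Qed.

Lemma zero_or_ge1_nonneg a : zero_or_ge1 a -> 0 <= a.
Proof. unfold zero_or_ge1; lra. Qed.

Lemma zero_or_abs_ge1_of_nonneg a : zero_or_ge1 a -> zero_or_abs_ge1 a.
Proof. now left. Qed.

Lemma zero_or_abs_ge1_opp a : zero_or_abs_ge1 a -> zero_or_abs_ge1 (- a).
Proof. unfold zero_or_abs_ge1; rewrite Ropp_involutive; tauto. Qed.

Lemma zero_or_abs_ge1_nonneg a : zero_or_abs_ge1 a -> 0 <= a -> zero_or_ge1 a.
Proof. unfold zero_or_abs_ge1, zero_or_ge1; lra. Qed.

Section Chebyshev.

Variable q : nat.
Hypothesis Hq : (3 <= q)%nat.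

Lemma xy_succ j : xy q (S j) = (lam q * fst (xy q j) - snd (xy q j), fst (xy q j)).
Proof.
  change (xy q (S j)) with (mvec (Umat q) (xy q j)).
  destruct (xy q j); unfold Umat; mat_ring.
Qed.

Let t := PI / INR q.

Lemma xy_sin j :
  fst (xy q j) * sin t = sin (INR (S j) * t) /\ snd (xy q j) * sin t = sin (INR j * t).
Proof.
  induction j as [|j [Hx Hy]].
  - change (xy q 0) with (1, 0); simpl; rewrite !Rmult_0_l, !Rmult_1_l, sin_0; split; ring.
  - rewrite xy_succ; simpl fst; simpl snd; split; [|exact Hx].
    replace (INR (S (S j)) * t) with (INR (S j) * t + t) by (rewrite (S_INR (S j)); ring).
    replace (INR j * t) with (INR (S j) * t - t) in Hy by (rewrite (S_INR j); ring).
    rewrite sin_plus; rewrite sin_minus in Hy; unfold lam; fold t.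
    transitivity (2 * cos t * (fst (xy q j) * sin t) - snd (xy q j) * sin t); [ring|].
    rewrite Hx, Hy; ring.
Qed.

Lemma angle_bounds : 0 < t <= PI / 3 /\ INR q * t = PI.
Proof.
  assert (3 <= INR q) by (replace 3 with (INR 3) by (simpl; ring); apply le_INR, Hq).
  pose proof PI_RGT_0. unfold t; repeat split.
  - apply Rdiv_lt_0_compat; lra.
  - apply Rmult_le_compat_l; [lra|]. apply Rinv_le_contravar; lra.
  - field; lra.
Qed.

Lemma sin_angle_le u : t <= u <= PI - t -> sin t <= sin u.
Proof.
  intros Hu. pose proof angle_bounds; pose proof PI_RGT_0.
  destruct (Rle_dec u (PI / 2)).
  - apply sin_incr_1; lra.
  - rewrite <- (sin_PI_x u). apply sin_incr_1; lra.
Qed.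

Lemma fst_xy_ge1 j : (j <= q - 2)%nat -> 1 <= fst (xy q j).
Proof.
  intros Hj. destruct (xy_sin j) as [Hx _]. destruct angle_bounds as [Ht Hqt].
  assert (INR (S j) + 1 <= INR q) by (rewrite <- S_INR; apply le_INR; lia).
  assert (1 <= INR (S j)) by (rewrite S_INR; pose proof (pos_INR j); lra).
  assert (sin t <= sin (INR (S j) * t)) by (apply sin_angle_le; nra).
  assert (0 < sin t) by (apply sin_gt_0; lra).
  nra.
Qed.

Lemma fst_xy_last : fst (xy q (q - 1)) = 0.
Proof.
  destruct (xy_sin (q - 1)) as [Hx _]. destruct angle_bounds as [Ht Hqt].
  replace (S (q - 1)) with q in Hx by lia. rewrite Hqt, sin_PI in Hx.
  assert (0 < sin t) by (apply sin_gt_0; lra). nra.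
Qed.

Lemma snd_xy_last : snd (xy q (q - 1)) = 1.
Proof.
  replace (q - 1)%nat with (S (q - 2)) by lia. rewrite xy_succ; simpl snd.
  destruct (xy_sin (q - 2)) as [Hx _]. destruct angle_bounds as [Ht Hqt].
  replace (INR (S (q - 2)) * t) with (PI - t) in Hx
    by (rewrite <- Hqt, S_INR, minus_INR by lia; simpl; ring).
  rewrite sin_PI_x in Hx.
  assert (0 < sin t) by (apply sin_gt_0; lra). nra.
Qed.

Lemma lam_bounds : 1 <= lam q < 2.
Proof.
  split.
  - pose proof (fst_xy_ge1 1 ltac:(lia)) as H1. rewrite xy_succ in H1; simpl in H1. lra.
  - destruct angle_bounds as [Ht _]. pose proof PI_RGT_0.
    assert (cos t < cos 0) by (apply cos_decreasing_1; lra).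
    rewrite cos_0 in *. unfold lam; fold t; lra.
Qed.

Lemma xy_zero_or_ge1 j :
  (j <= q - 1)%nat -> zero_or_ge1 (fst (xy q j)) /\ zero_or_ge1 (snd (xy q j)).
Proof.
  intros Hj. split.
  - destruct (Nat.eq_dec j (q - 1)) as [->|]; [left; apply fst_xy_last | right].
    apply fst_xy_ge1; lia.
  - destruct j as [|j]; [now left|right].
    rewrite xy_succ; apply fst_xy_ge1; lia.
Qed.

End Chebyshev.

Definition entrywise (P : R -> Prop) (M : mat2) : Prop :=
  P (m11 M) /\ P (m12 M) /\ P (m21 M) /\ P (m22 M).

Section NormalForm.

Variable q : nat.
Hypothesis Hq : (3 <= q)%nat.

Definition child_mat (j : nat) : mat2 := colmat (xy q j) (xy q (S j)).

Lemma child_mat_0 : child_mat 0 = Tmat q.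
Proof. unfold child_mat, colmat; rewrite xy_succ; mat_ring. Qed.

Lemma child_mat_succ j : child_mat (S j) = mmul (mmul (child_mat j) Smat) (Tmat q).
Proof. unfold child_mat, colmat; rewrite !xy_succ; mat_ring. Qed.

Lemma child_mat_succ_Tinv j : mmul (child_mat (S j)) (Tinv q) = mmul (child_mat j) Smat.
Proof. unfold child_mat, colmat; rewrite !xy_succ; mat_ring. Qed.

Lemma child_mat_last : child_mat (q - 1) = Smat.
Proof.
  unfold child_mat, colmat. rewrite xy_succ, fst_xy_last, snd_xy_last by exact Hq. mat_ring.
Qed.

Lemma inG_child_mat j : inG q (child_mat j).
Proof.
  induction j as [|j IH].
  - rewrite child_mat_0; apply inG_Tmat.
  - rewrite child_mat_succ; auto using inG_mmul, inG_Smat, inG_Tmat.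
Qed.

Inductive positive_word : mat2 -> Prop :=
| positive_word_id : positive_word Id2
| positive_word_child P j :
    positive_word P -> (j <= q - 2)%nat -> positive_word (mmul P (child_mat j)).

Definition Spow (n : nat) : mat2 := Nat.iter n (fun M => mmul M Smat) Id2.

Lemma Spow_succ n : Spow (S n) = mmul (Spow n) Smat.
Proof. reflexivity. Qed.

Definition normal_form (g : mat2) : Prop :=
  exists a M (b : bool), positive_word M /\ g = mmul (mmul (Spow a) M) (if b then Smat else Id2).

Lemma normal_form_mmul_Smat g : normal_form g -> normal_form (mmul g Smat).
Proof.
  intros [a [M [[|] [HM ->]]]].
  - exists (S (S a)), M, false; split; [exact HM|]. rewrite !Spow_succ.
    destruct (Spow a), M; mat_ring.
  - exists a, M, true; split; [exact HM|]. rewrite mmul_1r; reflexivity.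
Qed.

Lemma normal_form_mmul_Tmat g : normal_form g -> normal_form (mmul g (Tmat q)).
Proof.
  intros [a [M [[|] [HM ->]]]].
  - destruct HM as [|P j HP Hj].
    + exists (S a), (mmul Id2 (child_mat 0)), false; split; [constructor; [constructor | lia]|].
      rewrite child_mat_0, Spow_succ. destruct (Spow a); mat_ring.
    + replace (mmul (mmul (mmul (Spow a) (mmul P (child_mat j))) Smat) (Tmat q))
        with (mmul (mmul (Spow a) P) (child_mat (S j)))
        by (rewrite child_mat_succ; destruct (Spow a), P, (child_mat j); mat_ring).
      destruct (Nat.eq_dec j (q - 2)) as [->|Hj'].
      * exists a, P, true; split; [exact HP|].
        replace (S (q - 2)) with (q - 1)%nat by lia. rewrite child_mat_last; reflexivity.
      * exists a, (mmul P (child_mat (S j))), false; split; [constructor; [exact HP | lia]|].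
        rewrite mmul_1r; symmetry; apply mmul_assoc.
  - exists a, (mmul M (child_mat 0)), false; split; [constructor; [exact HM | lia]|].
    rewrite child_mat_0, !mmul_1r; symmetry; apply mmul_assoc.
Qed.

Lemma child_mat_penult_Smat : mmul (child_mat (q - 2)) Smat = mmul Smat (Tinv q).
Proof.
  rewrite <- child_mat_succ_Tinv. replace (S (q - 2)) with (q - 1)%nat by lia.
  rewrite child_mat_last; reflexivity.
Qed.

Lemma normal_form_mmul_Tinv g : normal_form g -> normal_form (mmul g (Tinv q)).
Proof.
  intros [a [M [[|] [HM ->]]]].
  - exists a, (mmul M (child_mat (q - 2))), true; split; [constructor; [exact HM | lia]|].
    replace (mmul (mmul (Spow a) (mmul M (child_mat (q - 2)))) Smat)
      with (mmul (mmul (Spow a) M) (mmul (child_mat (q - 2)) Smat))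
      by (destruct (Spow a), M, (child_mat (q - 2)); mat_ring).
    rewrite child_mat_penult_Smat. destruct (Spow a), M; mat_ring.
  - destruct HM as [|P [|j] HP Hj].
    + exists (S (S (S a))), (mmul Id2 (child_mat (q - 2))), true.
      split; [constructor; [constructor | lia]|].
      rewrite mmul_1l, <- (mmul_assoc (Spow (S _))), child_mat_penult_Smat, !Spow_succ.
      destruct (Spow a); mat_ring.
    + exists a, P, false; split; [exact HP|].
      rewrite child_mat_0. destruct (Spow a), P; mat_ring.
    + exists a, (mmul P (child_mat j)), true; split; [constructor; [exact HP | lia]|].
      replace (mmul (mmul (mmul (Spow a) (mmul P (child_mat (S j)))) Id2) (Tinv q))
        with (mmul (mmul (Spow a) P) (mmul (child_mat (S j)) (Tinv q)))
        by (destruct (Spow a), P, (child_mat (S j)); mat_ring).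
      rewrite child_mat_succ_Tinv. destruct (Spow a), P, (child_mat j); mat_ring.
Qed.

Lemma normal_form_mmul g h : inG q h -> normal_form g -> normal_form (mmul g h).
Proof.
  intros Hh; revert g; induction Hh as [| h Hh IH | h Hh IH | h Hh IH | h Hh IH]; intros g Hg.
  - rewrite mmul_1r; exact Hg.
  - rewrite mmul_assoc; apply IH, normal_form_mmul_Smat, Hg.
  - replace (mmul g (mmul Sinv h)) with (mmul (mmul (mmul (mmul g Smat) Smat) Smat) h)
      by (destruct g, h; mat_ring).
    apply IH; do 3 apply normal_form_mmul_Smat; exact Hg.
  - rewrite mmul_assoc; apply IH, normal_form_mmul_Tmat, Hg.
  - rewrite mmul_assoc; apply IH, normal_form_mmul_Tinv, Hg.
Qed.

Lemma inG_normal_form g : inG q g -> normal_form g.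
Proof.
  intros Hg. rewrite <- (mmul_1l g). apply normal_form_mmul; [exact Hg|].
  exists 0%nat, Id2, false; split; [constructor | simpl; mat_ring].
Qed.

Lemma positive_word_entries M : positive_word M -> entrywise zero_or_ge1 M.
Proof.
  induction 1 as [|P j HP [H11 [H12 [H21 H22]]] Hj].
  - unfold entrywise, zero_or_ge1; simpl; lra.
  - destruct (xy_zero_or_ge1 q Hq j ltac:(lia)) as [Hx Hy].
    destruct (xy_zero_or_ge1 q Hq (S j) ltac:(lia)) as [Hx' Hy'].
    unfold entrywise; destruct P; simpl in *.
    repeat split; apply zero_or_ge1_add; apply zero_or_ge1_mul; assumption.
Qed.

Lemma entrywise_Smat_l M :
  entrywise zero_or_abs_ge1 M -> entrywise zero_or_abs_ge1 (mmul Smat M).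
Proof.
  replace (mmul Smat M) with (Mat2 (- m21 M) (- m22 M) (m11 M) (m12 M))
    by (destruct M; mat_ring).
  unfold entrywise; simpl; intuition auto using zero_or_abs_ge1_opp.
Qed.

Lemma entrywise_Smat_r M :
  entrywise zero_or_abs_ge1 M -> entrywise zero_or_abs_ge1 (mmul M Smat).
Proof.
  replace (mmul M Smat) with (Mat2 (m12 M) (- m11 M) (m22 M) (- m21 M))
    by (destruct M; mat_ring).
  unfold entrywise; simpl; intuition auto using zero_or_abs_ge1_opp.
Qed.

Lemma inG_entries g : inG q g -> entrywise zero_or_abs_ge1 g.
Proof.
  intros Hg. destruct (inG_normal_form g Hg) as [a [M [b [HM ->]]]].
  assert (HSM : entrywise zero_or_abs_ge1 (mmul (Spow a) M)).
  { destruct (positive_word_entries M HM) as [H11 [H12 [H21 H22]]].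
    assert (HM' : entrywise zero_or_abs_ge1 M)
      by (repeat split; apply zero_or_abs_ge1_of_nonneg; assumption).
    clear - HM'. revert M HM'. induction a as [|a IH]; intros M HM'.
    - rewrite mmul_1l; exact HM'.
    - rewrite Spow_succ, <- mmul_assoc. apply IH, entrywise_Smat_l, HM'. }
  destruct b; [apply entrywise_Smat_r, HSM | rewrite mmul_1r; exact HSM].
Qed.

End NormalForm.

Section Lattice.

Variable q : nat.
Hypothesis Hq : (3 <= q)%nat.

Lemma inLambda_entries v :
  inLambda q v -> zero_or_abs_ge1 (fst v) /\ zero_or_abs_ge1 (snd v).
Proof.
  intros [g [Hg ->]]. destruct (inG_entries q Hq g Hg) as [H11 [_ [H21 _]]].
  destruct g; unfold mvec; simpl in *. rewrite !Rmult_1_r, !Rmult_0_r, !Rplus_0_r. auto.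
Qed.

(* Since [det g = 1], the diagonal entries of [g = (a *; 0 d)] satisfy [a d = 1]. *)
Lemma inLambda_axis_fst a : inLambda q (a, 0) -> 0 <= a -> a = 1.
Proof.
  intros [g [Hg E]] Ha. pose proof (inG_det q g Hg) as Hd.
  destruct (inG_entries q Hq g Hg) as [H11 [_ [_ H22]]].
  destruct g; unfold mvec, det in *; simpl in *. injection E as E1 E2.
  unfold zero_or_abs_ge1, zero_or_ge1 in *. nra.
Qed.

Lemma inLambda_axis_snd b : inLambda q (0, b) -> 0 <= b -> b = 1.
Proof.
  intros Hb. apply inLambda_axis_fst.
  replace (b, 0) with (mvec Sinv (0, b)) by (unfold mvec, Sinv; simpl; f_equal; ring).
  apply inLambda_mvec; [apply inG_Sinv | exact Hb].
Qed.

(* Reduce [a] modulo [lam q] to [0 <= r < lam q]; both [r] and [r - lam q] are entries of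
   lattice vectors, which leaves only [r = 0] because [lam q < 2]. *)
Lemma inLambda_snd_1 a : inLambda q (a, 1) -> exists k : Z, a = IZR k * lam q.
Proof.
  intros Ha. destruct (lam_bounds q Hq) as [Hl1 Hl2].
  set (k := Int_part (a / lam q)). exists k.
  destruct (base_Int_part (a / lam q)) as [K1 K2]; fold k in K1, K2.
  set (r := a - IZR k * lam q).
  assert (Hr : 0 <= r < lam q).
  { unfold r. apply Rmult_le_compat_r with (r := lam q) in K1; [|lra].
    assert (a / lam q < IZR k + 1) as K3 by lra.
    apply Rmult_lt_compat_r with (r := lam q) in K3; [|lra].
    replace (a / lam q * lam q) with a in K1, K3 by (field; lra). lra. }
  assert (Hr1 : inLambda q (r, 1)).
  { replace (r, 1) with (mvec (Tpow q (- k)) (a, 1))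
      by (unfold mvec, Tpow, r; simpl; rewrite opp_IZR; f_equal; ring).
    apply inLambda_mvec; [apply inG_Tpow | exact Ha]. }
  assert (Hr2 : inLambda q (r - lam q, 1)).
  { replace (r - lam q, 1) with (mvec (Tinv q) (r, 1))
      by (unfold mvec, Tinv; simpl; f_equal; ring).
    apply inLambda_mvec; [apply inG_Tinv | exact Hr1]. }
  destruct (inLambda_entries _ Hr1) as [Z1 _]. destruct (inLambda_entries _ Hr2) as [Z2 _].
  simpl in Z1, Z2. unfold zero_or_abs_ge1, zero_or_ge1 in Z1, Z2.
  assert (r = 0) by lra. unfold r in *; lra.
Qed.

Lemma hecke_basis_of_wedge u0 u1 :
  inLambda q u0 -> inLambda q u1 -> wedge u0 u1 = 1 -> hecke_basis q u0 u1.
Proof.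
  intros H0 H1 Hw. destruct (inLambda_hecke_basis q u0 H0) as [w0 Hb].
  assert (Hu1 : u1 = lincomb (wedge u1 w0) 1 u0 w0).
  { rewrite <- Hw. apply lincomb_wedge, (hecke_basis_wedge q), Hb. }
  destruct (inLambda_snd_1 (wedge u1 w0)) as [k Hk].
  { apply (hecke_basis_coords q u0 w0 u1); assumption. }
  rewrite Hu1, Hk. unfold hecke_basis.
  replace (colmat u0 (lincomb (IZR k * lam q) 1 u0 w0)) with (mmul (colmat u0 w0) (Tpow q k))
    by (unfold colmat, lincomb, Tpow, mmul; simpl; f_equal; ring).
  apply inG_mmul; [exact Hb | apply inG_Tpow].
Qed.

End Lattice.

Section Chain.

Variable A : Type.
Variable P : A -> A -> Prop.

Fixpoint chain (l : list A) : Prop :=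
  match l with
  | a :: (b :: _) as l' => P a b /\ chain l'
  | _ => True
  end.

Lemma chain_app_cons l w r : chain (l ++ [w]) -> chain (w :: r) -> chain (l ++ w :: r).
Proof.
  induction l as [|a [|b l] IH]; simpl; [tauto | tauto |].
  intros [Hab Hl] Hr; split; [exact Hab | exact (IH Hl Hr)].
Qed.

Lemma chain_map_seq (f : nat -> A) a n :
  (forall k, (a <= k)%nat -> (S k < a + n)%nat -> P (f k) (f (S k))) -> chain (map f (seq a n)).
Proof.
  revert a; induction n as [|[|n] IH]; intros a Hf; simpl; auto.
  split; [apply Hf; lia|]. apply (IH (S a)); intros k Hk1 Hk2; apply Hf; lia.
Qed.

Lemma chain_nth d l i : chain l -> (S i < length l)%nat -> P (nth i l d) (nth (S i) l d).
Proof.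
  revert i; induction l as [|a [|b l] IH]; intros i Hl Hi; simpl in Hi; try lia.
  destruct Hl as [Hab Hl]; destruct i as [|i]; [exact Hab|].
  apply (IH i Hl); simpl; lia.
Qed.

Lemma chain_Forall (Q : A -> Prop) l :
  (forall a b, P a b -> Q a /\ Q b) -> chain l -> (2 <= length l)%nat -> Forall Q l.
Proof.
  intros HPQ; induction l as [|a [|b l] IH]; intros Hl Hlen; simpl in Hlen; try lia.
  destruct Hl as [Hab Hl]. constructor; [apply (HPQ a b Hab)|].
  destruct l as [|c l]; [constructor; [apply (HPQ a b Hab) | constructor]|].
  apply IH; [exact Hl | simpl; lia].
Qed.

Definition infix (m l : list A) : Prop := exists l1 l2, l = l1 ++ m ++ l2.

Lemma infix_trans m l l' : infix m l -> infix l l' -> infix m l'.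
Proof.
  intros [l1 [l2 ->]] [l3 [l4 ->]].
  exists (l3 ++ l1), (l2 ++ l4). rewrite <- !app_assoc; reflexivity.
Qed.

Lemma infix_In x m l : infix m l -> In x m -> In x l.
Proof. intros [l1 [l2 ->]] Hx. apply in_or_app; right; apply in_or_app; left; exact Hx. Qed.

End Chain.

Arguments chain {A}.
Arguments infix {A}.

Section Refinement.

Variable q : nat.
Hypothesis Hq : (3 <= q)%nat.

Definition fan (v w : vec) : list vec := map (fun j => comb q j v w) (seq 0 q).

Lemma comb_0 v w : comb q 0 v w = v.
Proof. destruct v; unfold comb; simpl; f_equal; ring. Qed.

Lemma comb_last v w : comb q (q - 1) v w = w.
Proof.
  destruct w; unfold comb; rewrite fst_xy_last, snd_xy_last by exact Hq; simpl; f_equal; ring.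
Qed.

Lemma cons_refine_aux v w r : v :: refine_aux q v (w :: r) = fan v w ++ refine_aux q w r.
Proof.
  unfold fan. replace (seq 0 q) with (0%nat :: seq 1 (q - 1))
    by (destruct q; [lia | simpl; rewrite Nat.sub_0_r; reflexivity]).
  simpl; rewrite comb_0; reflexivity.
Qed.

Lemma fan_snoc v w : exists A, fan v w = A ++ [w].
Proof.
  unfold fan. replace (seq 0 q) with (seq 0 (q - 1 + 1)) by (f_equal; lia).
  rewrite seq_app, map_app; simpl. rewrite comb_last. eauto.
Qed.

Lemma fan_length v w : length (fan v w) = q.
Proof. unfold fan; rewrite length_map, length_seq; reflexivity. Qed.

Lemma infix_children_fan v w j :
  (j <= q - 2)%nat -> infix [comb q j v w; comb q (S j) v w] (fan v w).
Proof.
  intros Hj. unfold fan.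
  replace (seq 0 q) with (seq 0 j ++ [j; S j] ++ seq (S (S j)) (q - 2 - j)).
  - rewrite !map_app. eexists _, _; reflexivity.
  - replace (seq 0 q) with (seq 0 (j + (2 + (q - 2 - j)))) by (f_equal; lia).
    rewrite !seq_app, Nat.add_0_l, Nat.add_comm; reflexivity.
Qed.

Lemma refine_length l : (2 <= length l)%nat -> (2 <= length (refine q l))%nat.
Proof.
  destruct l as [|v [|w r]]; intros Hl; simpl in Hl; try lia.
  unfold refine; rewrite cons_refine_aux, length_app, fan_length. lia.
Qed.

Section ChainRefine.

Variable P : vec -> vec -> Prop.
Hypothesis P_children :
  forall v w, P v w -> forall j, (j <= q - 2)%nat -> P (comb q j v w) (comb q (S j) v w).

Lemma chain_fan v w : P v w -> chain P (fan v w).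
Proof. intros Hvw. apply chain_map_seq. intros k _ Hk. apply P_children; [exact Hvw | lia]. Qed.

Lemma chain_refine l : chain P l -> chain P (refine q l).
Proof.
  destruct l as [|v r]; [trivial|]. simpl refine. revert v.
  induction r as [|w r IH]; intros v Hl; [exact I|].
  destruct Hl as [Hvw Hr]. rewrite cons_refine_aux.
  destruct (fan_snoc v w) as [B EB]. rewrite EB, <- app_assoc; simpl.
  apply chain_app_cons; [rewrite <- EB; apply chain_fan, Hvw | apply IH, Hr].
Qed.

End ChainRefine.

Lemma cons_refine_aux_infix_fan v w l2 l1 x :
  exists B C, x :: refine_aux q x (l1 ++ v :: w :: l2) = B ++ fan v w ++ C.
Proof.
  revert x; induction l1 as [|y l1 IH]; intros x; cbn [app].
  - rewrite cons_refine_aux. destruct (fan_snoc x v) as [B ->].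
    exists B, (refine_aux q w l2).
    rewrite <- app_assoc; cbn [app]; rewrite cons_refine_aux; reflexivity.
  - rewrite cons_refine_aux. destruct (fan_snoc x y) as [B ->]. destruct (IH y) as [B' [C E]].
    exists (B ++ B'), C. rewrite <- app_assoc; cbn [app]; rewrite E, <- app_assoc; reflexivity.
Qed.

Lemma infix_children_refine l v w j :
  infix [v; w] l -> (j <= q - 2)%nat ->
  infix [comb q j v w; comb q (S j) v w] (refine q l).
Proof.
  intros [l1 [l2 ->]] Hj. apply infix_trans with (fan v w); [apply infix_children_fan, Hj|].
  destruct l1 as [|x l1]; cbn [app refine].
  - rewrite cons_refine_aux. exists [], (refine_aux q w l2); reflexivity.
  - destruct (cons_refine_aux_infix_fan v w l2 l1 x) as [B [C E]]. exists B, C; exact E.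
Qed.

End Refinement.

Lemma sign_change_nat (f : nat -> R) n :
  0 <= f 0%nat -> f (S n) <= 0 -> exists j, (j <= n)%nat /\ 0 <= f j /\ f (S j) <= 0.
Proof.
  intros H0; induction n as [|n IH]; intros Hn; [exists 0%nat; auto|].
  destruct (Rle_dec 0 (f (S n))) as [Hp|Hp].
  - exists (S n); auto.
  - destruct IH as [j [Hj Hf]]; [lra|]. exists j; split; [lia | exact Hf].
Qed.

Lemma in_sector_lincomb u0 u1 v w a b :
  in_sector u0 u1 v -> in_sector u0 u1 w -> 0 <= a -> 0 <= b ->
  in_sector u0 u1 (lincomb a b v w).
Proof.
  intros [a1 [b1 [Ha1 [Hb1 ->]]]] [a2 [b2 [Ha2 [Hb2 ->]]]] Ha Hb.
  exists (a * a1 + b * a2), (a * b1 + b * b2).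
  split; [nra | split; [nra | unfold lincomb; simpl; f_equal; ring]].
Qed.

Section Descent.

Variable q : nat.
Hypothesis Hq : (3 <= q)%nat.

Lemma hecke_basis_children v w j :
  hecke_basis q v w -> hecke_basis q (comb q j v w) (comb q (S j) v w).
Proof.
  unfold hecke_basis; intros Hb.
  replace (colmat (comb q j v w) (comb q (S j) v w)) with (mmul (colmat v w) (child_mat q j))
    by (unfold colmat, child_mat, comb, mmul; simpl; f_equal; ring).
  apply inG_mmul; [exact Hb | apply inG_child_mat].
Qed.

Lemma hecke_basis_coords_zero_or_ge1 v w z a b :
  hecke_basis q v w -> inLambda q z -> 0 <= a -> 0 <= b -> z = lincomb a b v w ->
  zero_or_ge1 a /\ zero_or_ge1 b.
Proof.
  intros Hb Hz Ha Hb0 Ez.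
  destruct (inLambda_entries q Hq _ (hecke_basis_coords q v w z a b Hb Hz Ez)) as [Za Zb].
  split; apply zero_or_abs_ge1_nonneg; assumption.
Qed.

Lemma sector_point_cases v w z a b :
  hecke_basis q v w -> inLambda q z -> 0 <= a -> 0 <= b -> z = lincomb a b v w ->
  z = v \/ z = w \/ (1 <= a /\ 1 <= b).
Proof.
  intros Hb Hz Ha Hb0 Ez. pose proof (hecke_basis_coords q v w z a b Hb Hz Ez) as Hab.
  destruct (hecke_basis_coords_zero_or_ge1 v w z a b Hb Hz Ha Hb0 Ez) as [[->|Ha1] [->|Hb1]].
  - pose proof (inLambda_axis_fst q Hq 0 Hab (Rle_refl 0)); lra.
  - right; left. rewrite (inLambda_axis_snd q Hq b Hab Hb0) in Ez.
    rewrite Ez; destruct w; unfold lincomb; simpl; f_equal; ring.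
  - left. rewrite (inLambda_axis_fst q Hq a Hab Ha) in Ez.
    rewrite Ez; destruct v; unfold lincomb; simpl; f_equal; ring.
  - right; right; split; assumption.
Qed.

Lemma sector_split a b :
  0 <= a -> 0 <= b ->
  exists j a' b', (j <= q - 2)%nat /\ 0 <= a' /\ 0 <= b' /\
    (a, b) = lincomb a' b' (xy q j) (xy q (S j)).
Proof.
  intros Ha Hb.
  destruct (sign_change_nat (fun k => wedge (xy q k) (a, b)) (q - 2)) as [j [Hj [F0 F1]]].
  - change (xy q 0) with (1, 0); unfold wedge; simpl; lra.
  - replace (S (q - 2)) with (q - 1)%nat by lia.
    unfold wedge; rewrite fst_xy_last, snd_xy_last by exact Hq; simpl; lra.
  - exists j, (wedge (a, b) (xy q (S j))), (wedge (xy q j) (a, b)).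
    repeat split; [exact Hj | unfold wedge in *; simpl in *; lra | exact F0 |].
    apply lincomb_wedge, (hecke_basis_wedge q), inG_child_mat.
Qed.

(* [1 <= x_j] for [j <= q - 2] and [y_(j+1) = x_j]; the case [j = 0] uses [x_1 = lam q >= 1]. *)
Lemma coords_decrease j a b a' b' :
  (j <= q - 2)%nat -> zero_or_ge1 a' -> zero_or_ge1 b' ->
  (a, b) = lincomb a' b' (xy q j) (xy q (S j)) -> 1 <= a -> 1 <= b -> a' + b' + 1 <= a + b.
Proof.
  intros Hj Ha' Hb' E Ha Hb.
  pose proof (f_equal fst E) as Ea; pose proof (f_equal snd E) as Eb.
  cbn [lincomb fst snd] in Ea, Eb.
  pose proof (fst_xy_ge1 q Hq j Hj) as Xj.
  destruct (xy_zero_or_ge1 q Hq (S j) ltac:(lia)) as [Xj1 _].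
  rewrite xy_succ in Eb; simpl in Eb.
  destruct j as [|j].
  - change (xy q 0) with (1, 0) in Ea, Eb, Xj; simpl in *.
    destruct (lam_bounds q Hq). nra.
  - assert (Yj : 1 <= snd (xy q (S j))) by (rewrite xy_succ; apply fst_xy_ge1; lia).
    unfold zero_or_ge1 in *; destruct Ha', Hb', Xj1; nra.
Qed.

Lemma descent N : forall l v w z a b,
  infix [v; w] l -> hecke_basis q v w -> inLambda q z -> 0 <= a -> 0 <= b ->
  z = lincomb a b v w -> a + b <= INR N -> exists n, In z (Nat.iter n (refine q) l).
Proof.
  induction N as [|N IH]; intros l v w z a b Hl Hb Hz Ha Hb0 Ez HN;
    (destruct (sector_point_cases v w z a b Hb Hz Ha Hb0 Ez) as [->|[->|[Ha1 Hb1]]];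
     [exists 0%nat; apply (infix_In _ _ [v; w]); simpl; auto .. |]).
  - simpl in HN; lra.
  - destruct (sector_split a b Ha Hb0) as [j [a' [b' [Hj [Ha' [Hb' Eab]]]]]].
    assert (Ez' : z = lincomb a' b' (comb q j v w) (comb q (S j) v w)).
    { rewrite Ez. change (lincomb a b v w) with (lincomb (fst (a, b)) (snd (a, b)) v w).
      rewrite Eab, lincomb_lincomb; reflexivity. }
    pose proof (hecke_basis_children v w j Hb) as Hbasis'.
    destruct (hecke_basis_coords_zero_or_ge1 _ _ z a' b' Hbasis' Hz Ha' Hb' Ez') as [Za Zb].
    pose proof (coords_decrease j a b a' b' Hj Za Zb Eab Ha1 Hb1) as Hdec.
    destruct (IH (refine q l) (comb q j v w) (comb q (S j) v w) z a' b') as [n Hn];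
      [apply infix_children_refine; assumption | assumption .. | rewrite S_INR in HN; lra |].
    exists (S n); rewrite Nat.iter_succ_r; exact Hn.
Qed.

End Descent.

Section Grandchildren.

Variable q : nat.
Hypothesis Hq : (3 <= q)%nat.
Variables u0 u1 : vec.
Hypothesis basis_u : hecke_basis q u0 u1.

Definition sector_basis (v w : vec) : Prop :=
  hecke_basis q v w /\ in_sector u0 u1 v /\ in_sector u0 u1 w.

Lemma sector_basis_children v w :
  sector_basis v w -> forall j, (j <= q - 2)%nat -> sector_basis (comb q j v w) (comb q (S j) v w).
Proof.
  intros [Hb [Sv Sw]] j Hj.
  destruct (xy_zero_or_ge1 q Hq j ltac:(lia)) as [Xj Yj].
  destruct (xy_zero_or_ge1 q Hq (S j) ltac:(lia)) as [Xj1 Yj1].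
  split; [apply hecke_basis_children, Hb|].
  split; apply in_sector_lincomb; auto using zero_or_ge1_nonneg.
Qed.

Lemma Ln_chain n : chain sector_basis (Ln q u0 u1 n) /\ (2 <= length (Ln q u0 u1 n))%nat.
Proof.
  induction n as [|n [Hc Hlen]].
  - repeat split; simpl; auto.
    + exists 1, 0; repeat split; try lra. destruct u0; simpl; f_equal; ring.
    + exists 0, 1; repeat split; try lra. destruct u1; simpl; f_equal; ring.
  - split; [apply chain_refine; [exact Hq | exact sector_basis_children | exact Hc]|].
    apply refine_length; assumption.
Qed.

Lemma Ln_In n v : In v (Ln q u0 u1 n) -> inLambda q v /\ in_sector u0 u1 v.
Proof.
  revert v; apply Forall_forall. destruct (Ln_chain n) as [Hc Hlen].
  apply (chain_Forall _ sector_basis); [|exact Hc | exact Hlen].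
  intros v w [Hb [Sv Sw]]. destruct (hecke_basis_inLambda q v w Hb). tauto.
Qed.

Lemma Ln_wedge n i :
  (S i < length (Ln q u0 u1 n))%nat ->
  wedge (nth i (Ln q u0 u1 n) (0, 0)) (nth (S i) (Ln q u0 u1 n) (0, 0)) = 1.
Proof.
  intros Hi. apply (hecke_basis_wedge q).
  apply (chain_nth _ sector_basis (0, 0) _ i (proj1 (Ln_chain n)) Hi).
Qed.

Lemma Ln_complete v : inLambda q v -> in_sector u0 u1 v -> exists n, In v (Ln q u0 u1 n).
Proof.
  intros Hv [a [b [Ha [Hb Ev]]]].
  destruct (archimed (a + b)) as [Hup _].
  apply (descent q Hq (Z.to_nat (up (a + b))) [u0; u1] u0 u1 v a b); try assumption.
  - exists [], []; reflexivity.
  - rewrite INR_IZR_INZ, Z2Nat.id; [lra|]. apply le_IZR; lra.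
Qed.

End Grandchildren.

Theorem mainTheorem2 (q : nat) (Hq : (3 <= q)%nat) (u0 u1 : vec)
  (H0 : inLambda q u0) (H1 : inLambda q u1) (Hw : wedge u0 u1 = 1) :
  (forall (n : nat) (v : vec), In v (Ln q u0 u1 n) ->
      inLambda q v /\ in_sector u0 u1 v) /\
  (forall (n i : nat), (S i < length (Ln q u0 u1 n))%nat ->
      wedge (nth i (Ln q u0 u1 n) (0, 0)) (nth (S i) (Ln q u0 u1 n) (0, 0)) = 1) /\
  (forall v : vec, inLambda q v -> in_sector u0 u1 v ->
      exists n : nat, In v (Ln q u0 u1 n)).
Proof.
  pose proof (hecke_basis_of_wedge q Hq u0 u1 H0 H1 Hw) as basis_u.
  split; [|split].
  - exact (Ln_In q Hq u0 u1 basis_u).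
  - exact (Ln_wedge q Hq u0 u1 basis_u).
  - exact (Ln_complete q Hq u0 u1 basis_u).
Qed.
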